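(* Let $\alpha\in\mathbb{R}$ and let $m\ge 0$ be an even integer. Let $b_0,\dots,b_m$ be the unique solution of $$\sum_{k=0}^{i}\frac{(-1)^{i-k}}{i-k+1}\,b_k=\frac{(-1)^{i+1}}{i+2}-\binom{-\alpha}{i+1},\qquad i=0,1,\dots,m,$$ and set $c_i=\sum_{k=i}^{m}\binom{k}{i}(-1)^{k-i}b_k$ for $i=0,\dots,m$. Then for every integer $n\ge 0$, every $h>0$, and every real polynomial $f$ of degree at most $m+1$, $$\int_{-\alpha h}^{(n+\alpha)h} f(t)\,dt \;=\; h\sum_{i=0}^{n} f(ih)\;+\;h\sum_{i=0}^{m} c_i\Big[f(ih)+f\big((n-i)h\big)\Big].$$
   Context: For real $x$ and integer $j\ge 0$, $\binom{x}{j}$ denotes the generalized binomial coefficient $x(x-1)\cdots(x-j+1)/j!$ (with $\binom{x}{0}=1$). The integral limits are oriented, and nodes outside $[0,nh]$ (when $\alpha<0$ or $m>n$) are used literally. *)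

From Stdlib Require Import Reals Lra.
From Coquelicot Require Import Coquelicot.
Open Scope R_scope.

Fixpoint fall (x : R) (j : nat) : R :=
  match j with
  | O => 1
  | S j' => fall x j' * (x - INR j')
  end.

Definition gbinom (x : R) (j : nat) : R := fall x j / INR (Factorial.fact j).

Definition polyR (a : nat -> R) (d : nat) (t : R) : R :=
  sum_f_R0 (fun j => a j * t ^ j) d.

Definition b_system (alpha : R) (m : nat) (b : nat -> R) : Prop :=
  forall i : nat, (i <= m)%nat ->
    sum_f_R0 (fun k => (-1) ^ (i - k) / INR (i - k + 1) * b k) i
    = (-1) ^ (i + 1) / INR (i + 2) - gbinom (- alpha) (i + 1).

(* c_i = sum_{k=i}^{m} binom(k,i) (-1)^(k-i) b_k, reindexed with k = i + j. *)
Definition c_coef (m : nat) (b : nat -> R) (i : nat) : R :=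
  sum_f_R0 (fun j => gbinom (INR (i + j)) i * (-1) ^ j * b (i + j)%nat) (m - i).

(* Rescale t = h s and let G be an antiderivative of f, a polynomial of degree
   at most m + 2.  The claim becomes
     G (n + alpha) - G (- alpha) = sum_(i <= n) G'(i) + sum_i c_i (G'(i) + G'(n - i)).
   Call [defect G x] the left side minus the correction sum, with n replaced by x;
   it suffices that [defect G x - defect G (x - 1) = G'(x)] and [defect G (-1) = 0].
   The first identity is, after the reflection t |-> - G (x - t), the one-step rule
     G (1 - alpha) - G (- alpha) = G'(0) - sum_i c_i (G'(i + 1) - G'(i)),
   which is linear in G.  On the binomial basis s |-> binom(s, j), whose
   derivatives are mapped to one another by forward differences, Newton's
   forward-difference formula turns the correction sum into sum_k b_k Delta^k G'(0)
   and the rule becomes the defining system of the b_k.  For the second identity,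
   G splits into a multiple of (s + 1/2)^(m + 2), symmetric about -1/2 because m is
   even, and a forward difference of a polynomial of degree m + 2, to which the
   one-step rule applies twice. *)

From Stdlib Require Import Reals Lra Lia FunctionalExtensionality.
From Coquelicot Require Import Coquelicot.
Open Scope R_scope.

(** * Polynomial functions *)

Fixpoint is_poly (d : nat) (F : R -> R) : Prop :=
  match d with
  | O => exists c, forall s, F s = c
  | S d' => exists c G, is_poly d' G /\ forall s, F s = c + s * G s
  end.

Lemma is_poly_ext d F G : (forall s, F s = G s) -> is_poly d F -> is_poly d G.
Proof.
  destruct d as [|d]; simpl.
  - intros HFG [c Hc]. exists c. intros s. rewrite <- HFG. auto.
  - intros HFG [c [F1 [HF1 Hc]]]. exists c, F1. split; auto. intros s. rewrite <- HFG. auto.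
Qed.

Lemma is_poly_const d c : is_poly d (fun _ => c).
Proof.
  revert c; induction d as [|d IH]; intros c; simpl.
  - exists c. auto.
  - exists c, (fun _ => 0). split; [apply IH | intros; ring].
Qed.

Lemma is_poly_plus d F G : is_poly d F -> is_poly d G -> is_poly d (fun s => F s + G s).
Proof.
  revert F G; induction d as [|d IH]; simpl.
  - intros F G [c1 H1] [c2 H2]. exists (c1 + c2). intros; rewrite H1, H2; auto.
  - intros F G [c1 [F1 [P1 H1]]] [c2 [G1 [P2 H2]]].
    exists (c1 + c2), (fun s => F1 s + G1 s). split; [auto | intros; rewrite H1, H2; ring].
Qed.

Lemma is_poly_scal d c F : is_poly d F -> is_poly d (fun s => c * F s).
Proof.
  revert F; induction d as [|d IH]; simpl.
  - intros F [c1 H1]. exists (c * c1). intros; rewrite H1; auto.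
  - intros F [c1 [F1 [P1 H1]]].
    exists (c * c1), (fun s => c * F1 s). split; [auto | intros; rewrite H1; ring].
Qed.

Lemma is_poly_lin d F G c : is_poly d F -> is_poly d G -> is_poly d (fun s => F s + c * G s).
Proof. intros; apply is_poly_plus, is_poly_scal; auto. Qed.

Lemma is_poly_S d F : is_poly d F -> is_poly (S d) F.
Proof.
  revert F; induction d as [|d IH]; intros F.
  - intros [c H]. exists c, (fun _ => 0). split; [exists 0; auto | intros; rewrite H; ring].
  - intros [c [F1 [P1 H1]]]. exists c, F1. auto.
Qed.

Lemma is_poly_le d d' F : (d <= d')%nat -> is_poly d F -> is_poly d' F.
Proof. induction 1; auto using is_poly_S. Qed.

Lemma is_poly_mul_id d F : is_poly d F -> is_poly (S d) (fun s => s * F s).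
Proof. intros H. exists 0, F. split; auto. intros; ring. Qed.

Lemma is_poly_pow d : is_poly d (fun s => s ^ d).
Proof.
  induction d as [|d IH].
  - exists 1; auto.
  - exists 0, (fun s => s ^ d). split; auto. intros; simpl; ring.
Qed.

Lemma is_poly_affine d A u v F : is_poly d F -> is_poly d (fun s => A * F (u * s + v)).
Proof.
  revert A F; induction d as [|d IH]; intros A F.
  - intros [c H]. exists (A * c). intros; rewrite H; auto.
  - intros [c [F1 [P1 H1]]].
    apply is_poly_ext with
      (fun s => (A * c + A * v * F1 (u * s + v)) + s * (A * u * F1 (u * s + v))).
    { intros s. rewrite H1. ring. }
    apply is_poly_plus; [apply is_poly_plus|].
    + apply is_poly_const.
    + apply is_poly_S, IH, P1.
    + apply is_poly_mul_id, IH, P1.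
Qed.

Lemma is_poly_reflect d G c : is_poly d G -> is_poly d (fun t => - G (c - t)).
Proof.
  intros HG. apply is_poly_ext with (fun t => -1 * G (-1 * t + c)).
  { intros t. replace (-1 * t + c) with (c - t) by ring. ring. }
  apply is_poly_affine, HG.
Qed.

Lemma is_poly_lead d G :
  is_poly (S d) G -> exists l r, is_poly d r /\ forall s, G s = l * s ^ S d + r s.
Proof.
  revert G; induction d as [|d IH]; intros G [c [G1 [P1 H1]]].
  - destruct P1 as [l Hl]. exists l, (fun _ => c). split; [exists c; auto|].
    intros; rewrite H1, Hl; simpl; ring.
  - destruct (IH G1 P1) as [l [r [Pr Hr]]]. exists l, (fun s => c + s * r s). split.
    + exists c, r; auto.
    + intros; rewrite H1, Hr; simpl; ring.
Qed.

Lemma is_poly_polyR a d : is_poly d (polyR a d).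
Proof.
  induction d as [|d IH].
  - exists (a 0%nat). intros; unfold polyR; simpl; ring.
  - apply is_poly_ext with (fun s => polyR a d s + a (S d) * s ^ S d).
    { intros; reflexivity. }
    apply is_poly_plus; [apply is_poly_S, IH | apply is_poly_scal, is_poly_pow].
Qed.

Lemma is_poly_ex_derive d F : is_poly d F -> forall s, ex_derive F s.
Proof.
  revert F; induction d as [|d IH]; intros F.
  - intros [c H] s. apply ex_derive_ext with (fun _ => c); [auto | apply ex_derive_const].
  - intros [c [F1 [P1 H1]]] s. apply ex_derive_ext with (fun s => c + s * F1 s); [auto|].
    auto_derive. apply IH, P1.
Qed.

Lemma Derive_affine F A u v s : ex_derive F (u * s + v) ->
  Derive (fun t => A * F (u * t + v)) s = A * u * Derive F (u * s + v).
Proof.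
  intros HF. rewrite Derive_scal, Derive_comp; auto.
  - replace (Derive (fun t => u * t + v) s) with u; [ring|].
    symmetry; apply is_derive_unique; auto_derive; auto; ring.
  - auto_derive; auto.
Qed.

Lemma Derive_reflect G c s : (forall t, ex_derive G t) ->
  Derive (fun t => G (c - t)) s = - Derive G (c - s).
Proof.
  intros HG. rewrite (Derive_ext _ (fun t => 1 * G (-1 * t + c)))
    by (intros; rewrite Rmult_1_l; f_equal; ring).
  rewrite Derive_affine by auto. replace (-1 * s + c) with (c - s) by ring. ring.
Qed.

Lemma Derive_lin F G c s : ex_derive F s -> ex_derive G s ->
  Derive (fun t => F t + c * G t) s = Derive F s + c * Derive G s.
Proof.
  intros HF HG. rewrite Derive_plus, Derive_scal; auto. apply ex_derive_scal, HG.
Qed.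

Definition fdiff (F : R -> R) (t : R) : R := F (t + 1) - F t.

Fixpoint fdiffn (k : nat) (F : R -> R) : R -> R :=
  match k with
  | O => F
  | S k' => fdiffn k' (fdiff F)
  end.

Lemma Derive_fdiff F x : (forall s, ex_derive F s) ->
  Derive (fdiff F) x = fdiff (Derive F) x.
Proof.
  intros HF. unfold fdiff.
  assert (Hshift : ex_derive (fun t => t + 1) x) by (auto_derive; auto).
  rewrite Derive_minus, Derive_comp; auto.
  - replace (Derive (fun t => t + 1) x) with 1
      by (symmetry; apply is_derive_unique; auto_derive; auto; ring).
    simpl; ring.
  - apply ex_derive_comp; auto.
Qed.

(** * Generalized binomial coefficients *)

Lemma fall_shift x j : fall (x + 1) (S j) = (x + 1) * fall x j.
Proof.
  induction j as [|j IH]; [simpl; ring|].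
  change (fall (x + 1) (S (S j))) with (fall (x + 1) (S j) * (x + 1 - INR (S j))).
  rewrite IH, S_INR. simpl. ring.
Qed.

Lemma gbinom_0 x : gbinom x 0 = 1.
Proof. unfold gbinom; simpl; field. Qed.

Lemma gbinom_pascal x j : gbinom (x + 1) (S j) - gbinom x (S j) = gbinom x j.
Proof.
  unfold gbinom. rewrite fall_shift.
  change (Factorial.fact (S j)) with (S j * Factorial.fact j)%nat.
  rewrite mult_INR, S_INR. simpl fall.
  assert (Hj : INR j + 1 <> 0) by (rewrite <- S_INR; apply not_0_INR; lia).
  field. split; [apply INR_fact_neq_0 | exact Hj].
Qed.

Lemma gbinom_nat_high k : gbinom (INR k) (S k) = 0.
Proof. unfold gbinom. simpl fall. rewrite Rminus_diag. unfold Rdiv. ring. Qed.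

Lemma is_poly_fall j : is_poly j (fun s => fall s j).
Proof.
  induction j as [|j IH]; [exists 1; auto|].
  apply is_poly_ext with (fun s => s * fall s j + (- INR j) * fall s j).
  { intros s; simpl; ring. }
  apply is_poly_lin; [apply is_poly_mul_id, IH | apply is_poly_S, IH].
Qed.

Lemma is_poly_gbinom j : is_poly j (fun s => gbinom s j).
Proof.
  apply is_poly_ext with (fun s => / INR (Factorial.fact j) * fall s j).
  { intros s; unfold gbinom, Rdiv; ring. }
  apply is_poly_scal, is_poly_fall.
Qed.

Lemma is_poly_fall_sub_pow j : is_poly j (fun s => fall s (S j) - s ^ S j).
Proof.
  induction j as [|j IH]; [exists 0; intros; simpl; ring|].
  apply is_poly_ext with
    (fun s => s * (fall s (S j) - s ^ S j) + (- INR (S j)) * fall s (S j)).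
  { intros s. change (fall s (S (S j))) with (fall s (S j) * (s - INR (S j))).
    simpl; ring. }
  apply is_poly_lin; [apply is_poly_mul_id, IH | apply is_poly_fall].
Qed.

Lemma is_poly_ind_gbinom (P : (R -> R) -> Prop) d :
  (forall j, (j <= d)%nat -> P (fun s => gbinom s j)) ->
  (forall F G c, is_poly d F -> is_poly d G -> P F -> P G -> P (fun s => F s + c * G s)) ->
  forall F, is_poly d F -> P F.
Proof.
  induction d as [|d IH]; intros Pbinom Plin F HF.
  - destruct HF as [c Hc].
    replace F with (fun s => gbinom s 0 + (c - 1) * gbinom s 0).
    { apply Plin; auto using is_poly_gbinom. }
    apply functional_extensionality; intros s. rewrite Hc, gbinom_0. ring.
  - destruct (is_poly_lead d F HF) as [l [r [Hr HFr]]].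
    set (k := INR (Factorial.fact (S d))).
    set (E := fun s => fall s (S d) - s ^ S d).
    assert (HE : is_poly d E) by apply is_poly_fall_sub_pow.
    replace F with (fun s => (r s + (- l) * E s) + (l * k) * gbinom s (S d)).
    { apply Plin; auto using is_poly_gbinom.
      - apply is_poly_S, is_poly_lin; auto.
      - apply IH; [intros j Hj; apply Pbinom; lia | | apply is_poly_lin; auto].
        intros G1 G2 c HG1 HG2; apply Plin; auto using is_poly_S. }
    apply functional_extensionality; intros s.
    rewrite HFr. unfold E, k, gbinom. field. apply INR_fact_neq_0.
Qed.

Lemma is_poly_antidiff d G : is_poly d G -> exists K, is_poly (S d) K /\ G = fdiff K.
Proof.
  revert G; apply is_poly_ind_gbinom.
  - intros j Hj. exists (fun s => gbinom s (S j)). split.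
    + apply is_poly_le with (S j); [lia | apply is_poly_gbinom].
    + apply functional_extensionality; intros s. unfold fdiff. now rewrite gbinom_pascal.
  - intros F G c _ _ [KF [HKF ->]] [KG [HKG ->]].
    exists (fun s => KF s + c * KG s). split; [apply is_poly_lin; auto|].
    apply functional_extensionality; intros s. unfold fdiff. ring.
Qed.

Definition dgbinom (j : nat) (x : R) : R := Derive (fun t => gbinom t j) x.

Lemma dgbinom_0 x : dgbinom 0 x = 0.
Proof.
  unfold dgbinom. rewrite (Derive_ext _ (fun _ => 1)) by apply gbinom_0.
  apply Derive_const.
Qed.

Lemma fdiff_dgbinom j : fdiff (dgbinom j) = dgbinom (pred j).
Proof.
  apply functional_extensionality; intros x.
  destruct j as [|j]; [unfold fdiff; rewrite !dgbinom_0; ring|].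
  unfold dgbinom. rewrite <- Derive_fdiff by apply (is_poly_ex_derive _ _ (is_poly_gbinom _)).
  apply Derive_ext. intros t. apply gbinom_pascal.
Qed.

(* For [k > j] the truncated subtraction gives [dgbinom 0 = 0], which is also correct. *)
Lemma fdiffn_dgbinom k j : fdiffn k (dgbinom j) = dgbinom (j - k).
Proof.
  revert j; induction k as [|k IH]; intros j; simpl.
  - now rewrite Nat.sub_0_r.
  - rewrite fdiff_dgbinom, IH. f_equal. lia.
Qed.

Lemma Derive_fall_at_0 j :
  Derive (fun t => fall t (S j)) 0 = (-1) ^ j * INR (Factorial.fact j).
Proof.
  induction j as [|j IH].
  - rewrite (Derive_ext _ id) by (intros; unfold id; simpl; ring).
    rewrite Derive_id. simpl; ring.
  - change (fun t => fall t (S (S j))) with (fun t => fall t (S j) * (t - INR (S j))).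
    rewrite Derive_mult;
      [| apply (is_poly_ex_derive _ _ (is_poly_fall _)) | auto_derive; auto].
    rewrite IH.
    replace (Derive (fun t => t - INR (S j)) 0) with 1
      by (symmetry; apply is_derive_unique; auto_derive; auto; ring).
    assert (Hfall0 : fall 0 (S j) = 0).
    { replace 0 with (-1 + 1) at 1 by ring. rewrite fall_shift. ring. }
    rewrite Hfall0.
    change (Factorial.fact (S j)) with (S j * Factorial.fact j)%nat.
    rewrite mult_INR. simpl pow. ring.
Qed.

Lemma dgbinom_at_0 j : dgbinom (S j) 0 = (-1) ^ j / INR (j + 1).
Proof.
  unfold dgbinom, gbinom.
  rewrite (Derive_ext _ (fun t => / INR (Factorial.fact (S j)) * fall t (S j)))
    by (intros; unfold Rdiv; ring).
  rewrite Derive_scal, Derive_fall_at_0.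
  change (Factorial.fact (S j)) with (S j * Factorial.fact j)%nat.
  rewrite mult_INR, Nat.add_1_r. field.
  split; [apply not_0_INR; lia | apply INR_fact_neq_0].
Qed.

(** * Finite sums and Newton's forward-difference formula *)

Lemma sum_f_R0_lin (u v : nat -> R) c n :
  sum_f_R0 (fun i => u i + c * v i) n = sum_f_R0 u n + c * sum_f_R0 v n.
Proof. induction n as [|n IH]; simpl; [|rewrite IH]; ring. Qed.

Lemma sum_f_R0_trunc (u : nat -> R) i n : (i <= n)%nat ->
  (forall k, (i < k <= n)%nat -> u k = 0) -> sum_f_R0 u n = sum_f_R0 u i.
Proof.
  induction 1 as [|n Hin IH]; intros Hzero; [reflexivity|].
  rewrite tech5, Hzero by lia. rewrite IH by (intros; apply Hzero; lia). ring.
Qed.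

Lemma telescope_nat (E g : R -> R) :
  E (-1) = 0 -> (forall x, E x - E (x - 1) = g x) ->
  forall n, E (INR n) = sum_f_R0 (fun i => g (INR i)) n.
Proof.
  intros E0 Estep n. induction n as [|n IH].
  - simpl. rewrite <- (Estep 0). replace (0 - 1) with (-1) by ring. rewrite E0. ring.
  - rewrite tech5, <- IH, <- Estep, S_INR. replace (INR n + 1 - 1) with (INR n) by ring. ring.
Qed.

Definition newton_coef (k i : nat) : R := gbinom (INR k) i * (-1) ^ (k - i).

Lemma newton_coef_S_0 k : newton_coef (S k) 0 = - newton_coef k 0.
Proof. unfold newton_coef. rewrite !gbinom_0, !Nat.sub_0_r. simpl; ring. Qed.

Lemma newton_coef_S_S k i : (i <= k)%nat ->
  newton_coef (S k) (S i) = newton_coef k i - newton_coef k (S i).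
Proof.
  intros Hik. unfold newton_coef.
  rewrite S_INR, <- (gbinom_pascal (INR k) i). simpl (S k - S i)%nat.
  destruct (Nat.eq_dec i k) as [->|Hne].
  - rewrite gbinom_nat_high, Nat.sub_diag. simpl; ring.
  - replace (k - i)%nat with (S (k - S i)) by lia. simpl; ring.
Qed.

Lemma newton_coef_high k : newton_coef k (S k) = 0.
Proof. unfold newton_coef. rewrite gbinom_nat_high. ring. Qed.

Lemma fdiffn_newton k F s :
  fdiffn k F s = sum_f_R0 (fun i => newton_coef k i * F (s + INR i)) k.
Proof.
  revert F; induction k as [|k IH]; intros F.
  - unfold newton_coef; simpl. rewrite gbinom_0, Rplus_0_r. ring.
  - simpl fdiffn. rewrite IH. unfold fdiff.
    set (g := fun i => newton_coef k i * F (s + INR i)).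
    rewrite (sum_eq _ (fun i => newton_coef k i * F (s + INR i + 1) - g i))
      by (intros; unfold g; ring).
    rewrite (decomp_sum _ (S k)) by lia. simpl pred.
    rewrite newton_coef_S_0, Rplus_0_r.
    rewrite (sum_eq (fun i => newton_coef (S k) (S i) * F (s + INR (S i)))
                    (fun i => newton_coef k i * F (s + INR i + 1) - g (S i))).
    2: { intros i Hi. unfold g. rewrite newton_coef_S_S, S_INR by exact Hi.
         rewrite Rplus_assoc. ring. }
    pose proof (decomp_sum g (S k) (Nat.lt_0_succ k)) as Hshift.
    rewrite tech5 in Hshift. unfold g at 2 in Hshift. rewrite newton_coef_high in Hshift.
    replace (g 0%nat) with (newton_coef k 0 * F s) in Hshift
      by (unfold g; simpl; rewrite Rplus_0_r; ring).
    simpl pred in Hshift. rewrite !minus_sum. lra.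
Qed.

Lemma c_coef_S m b i : (i <= m)%nat ->
  c_coef (S m) b i = c_coef m b i + newton_coef (S m) i * b (S m).
Proof.
  intros Him. unfold c_coef, newton_coef.
  replace (S m - i)%nat with (S (m - i)) by lia.
  rewrite tech5. replace (i + S (m - i))%nat with (S m) by lia. ring.
Qed.

Lemma c_coef_diag m b : c_coef m b m = newton_coef m m * b m.
Proof. unfold c_coef, newton_coef. rewrite Nat.sub_diag. simpl. rewrite Nat.add_0_r. ring. Qed.

Lemma sum_c_coef_newton m b F :
  sum_f_R0 (fun i => c_coef m b i * F (INR i)) m
  = sum_f_R0 (fun k => b k * fdiffn k F 0) m.
Proof.
  induction m as [|m IH].
  - simpl. rewrite c_coef_diag. unfold newton_coef. simpl. rewrite gbinom_0. ring.
  - rewrite !tech5, <- IH, c_coef_diag, fdiffn_newton.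
    rewrite (sum_eq _ (fun i => c_coef m b i * F (INR i)
                               + b (S m) * (newton_coef (S m) i * F (0 + INR i))))
      by (intros; rewrite c_coef_S, Rplus_0_l by auto; ring).
    rewrite sum_f_R0_lin, tech5, Rplus_0_l. ring.
Qed.

(** * The end-corrected rule for unit step *)

Section EndCorrection.

Variables (alpha : R) (m : nat) (b : nat -> R).

Definition csum (g : nat -> R) : R := sum_f_R0 (fun i => c_coef m b i * g i) m.

Lemma csum_ext u v : (forall i, u i = v i) -> csum u = csum v.
Proof. intros Huv. apply sum_eq. intros; rewrite Huv; auto. Qed.

Lemma csum_lin u v c : csum (fun i => u i + c * v i) = csum u + c * csum v.
Proof.
  unfold csum. rewrite <- sum_f_R0_lin. apply sum_eq. intros; ring.
Qed.

Lemma csum_0 : csum (fun _ => 0) = 0.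
Proof.
  unfold csum. rewrite (sum_eq _ (fun _ => 0)) by (intros; ring). rewrite sum_cte. ring.
Qed.

Hypothesis b_sys : b_system alpha m b.

Lemma csum_dgbinom i : (i <= m)%nat ->
  csum (fun l => dgbinom (S i) (INR l))
  = (-1) ^ (i + 1) / INR (i + 2) - gbinom (- alpha) (i + 1).
Proof.
  intros Him. unfold csum.
  rewrite (sum_c_coef_newton m b (dgbinom (S i))).
  rewrite (sum_f_R0_trunc _ i m Him).
  2: { intros k Hk. rewrite fdiffn_dgbinom. replace (S i - k)%nat with 0%nat by lia.
       rewrite dgbinom_0. ring. }
  rewrite <- (b_sys i Him). apply sum_eq. intros k Hk.
  rewrite fdiffn_dgbinom. replace (S i - k)%nat with (S (i - k)) by lia.
  rewrite dgbinom_at_0. ring.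
Qed.

Lemma endpoint_step G : is_poly (m + 2) G ->
  G (1 - alpha) - G (- alpha)
  = Derive G 0 - csum (fun i => Derive G (INR i + 1) - Derive G (INR i)).
Proof.
  revert G; apply is_poly_ind_gbinom.
  - intros j Hj. change (Derive (fun s => gbinom s j)) with (dgbinom j).
    rewrite (csum_ext _ (fun i => fdiff (dgbinom j) (INR i))) by reflexivity.
    rewrite fdiff_dgbinom. replace (1 - alpha) with (- alpha + 1) by ring.
    destruct j as [|[|i]]; simpl pred.
    + rewrite !gbinom_0, dgbinom_0, (csum_ext _ (fun _ => 0)), csum_0
        by (intros; apply dgbinom_0).
      ring.
    + rewrite gbinom_pascal, gbinom_0, (csum_ext _ (fun _ => 0)), csum_0
        by (intros; apply dgbinom_0).
      rewrite dgbinom_at_0. simpl. field.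
    + rewrite gbinom_pascal, csum_dgbinom, dgbinom_at_0 by lia.
      replace (S i + 1)%nat with (i + 2)%nat by lia.
      rewrite Nat.add_1_r. ring.
  - intros F1 F2 c HF1 HF2 E1 E2.
    assert (HD : forall t,
      Derive (fun s => F1 s + c * F2 s) t = Derive F1 t + c * Derive F2 t).
    { intros t. apply Derive_lin; eapply is_poly_ex_derive; eauto. }
    rewrite !HD, (csum_ext _ (fun i => (Derive F1 (INR i + 1) - Derive F1 (INR i))
                                   + c * (Derive F2 (INR i + 1) - Derive F2 (INR i))))
      by (intros; rewrite !HD; ring).
    rewrite csum_lin.
    replace (F1 (1 - alpha) + c * F2 (1 - alpha) - (F1 (- alpha) + c * F2 (- alpha)))
      with ((F1 (1 - alpha) - F1 (- alpha)) + c * (F2 (1 - alpha) - F2 (- alpha))) by ring.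
    rewrite E1, E2. ring.
Qed.

Definition defect (G : R -> R) (x : R) : R :=
  G (x + alpha) - G (- alpha) - csum (fun i => Derive G (INR i) + Derive G (x - INR i)).

Lemma defect_lin F G c x : (forall s, ex_derive F s) -> (forall s, ex_derive G s) ->
  defect (fun s => F s + c * G s) x = defect F x + c * defect G x.
Proof.
  intros HF HG. unfold defect.
  rewrite (csum_ext _ (fun i => (Derive F (INR i) + Derive F (x - INR i))
                                + c * (Derive G (INR i) + Derive G (x - INR i))))
    by (intros; rewrite !Derive_lin by auto; ring).
  rewrite csum_lin. ring.
Qed.

Lemma defect_step G x : is_poly (m + 2) G -> defect G x - defect G (x - 1) = Derive G x.
Proof.
  intros HG.
  assert (HGd := is_poly_ex_derive _ _ HG).
  pose proof (endpoint_step _ (is_poly_reflect _ _ x HG)) as Hrefl.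
  assert (HD : forall t, Derive (fun s => - G (x - s)) t = Derive G (x - t)).
  { intros t. rewrite Derive_opp, Derive_reflect by auto. ring. }
  rewrite HD, (csum_ext _ (fun i => Derive G (x - (INR i + 1)) - Derive G (x - INR i)))
    in Hrefl by (intros; rewrite !HD; ring).
  unfold defect.
  rewrite (csum_ext (fun i => Derive G (INR i) + Derive G (x - INR i))
                    (fun i => (Derive G (INR i) + Derive G (x - 1 - INR i))
                              + (-1) * (Derive G (x - (INR i + 1)) - Derive G (x - INR i))))
    by (intros; replace (x - 1 - INR i) with (x - (INR i + 1)) by ring; ring).
  rewrite csum_lin.
  replace (x - (1 - alpha)) with (x - 1 + alpha) in Hrefl by ring.
  replace (x - - alpha) with (x + alpha) in Hrefl by ring.
  rewrite Rminus_0_r in Hrefl. lra.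
Qed.

Lemma defect_symmetric G : (forall s, ex_derive G s) -> (forall t, G (-1 - t) = G t) ->
  defect G (-1) = 0.
Proof.
  intros HGd Hsym.
  assert (HD : forall t, Derive G (-1 - t) = - Derive G t).
  { intros t. rewrite <- (Derive_ext (fun s => G (-1 - s)) G t) by auto.
    rewrite Derive_reflect by auto. replace (-1 - (-1 - t)) with t by ring. ring. }
  unfold defect. rewrite (csum_ext _ (fun _ => 0)) by (intros; rewrite HD; ring).
  rewrite csum_0, <- (Hsym (- alpha)). replace (-1 - - alpha) with (-1 + alpha) by ring. ring.
Qed.

Lemma defect_fdiff K : is_poly (m + 2) K -> defect (fdiff K) (-1) = 0.
Proof.
  intros HK.
  assert (HKd := is_poly_ex_derive _ _ HK).
  pose proof (endpoint_step _ HK) as Hend.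
  pose proof (defect_step _ 0 HK) as Hstep.
  unfold defect in *.
  rewrite (csum_ext _ (fun i => (Derive K (INR i + 1) - Derive K (INR i))
       + 1 * ((Derive K (INR i) + Derive K (0 - INR i))
              + (-1) * (Derive K (INR i) + Derive K (0 - 1 - INR i)))))
    by (intros; rewrite !Derive_fdiff by auto; unfold fdiff;
        replace (-1 - INR i + 1) with (0 - INR i) by ring;
        replace (-1 - INR i) with (0 - 1 - INR i) by ring; ring).
  rewrite !csum_lin. unfold fdiff.
  replace (0 - 1 + alpha) with (-1 + alpha) in Hstep by ring.
  replace (-1 + alpha + 1) with (0 + alpha) by ring.
  replace (- alpha + 1) with (1 - alpha) by ring.
  lra.
Qed.

Hypothesis m_even : Nat.Even m.

Lemma defect_at_m1 G : is_poly (m + 2) G -> defect G (-1) = 0.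
Proof.
  intros HG.
  destruct (is_poly_lead (m + 1) (fun s => 1 * G (1 * s + - / 2))) as [l [r [Hr HGr]]].
  { replace (S (m + 1)) with (m + 2)%nat by lia. apply is_poly_affine, HG. }
  destruct (is_poly_antidiff _ _ (is_poly_affine _ 1 1 (/ 2) _ Hr)) as [K [HK HrK]].
  set (P := fun t => (t + / 2) ^ (m + 2)).
  replace G with (fun t => fdiff K t + l * P t).
  2: { apply functional_extensionality; intros t. rewrite <- HrK. unfold P; cbv beta.
       replace (m + 2)%nat with (S (m + 1)) by lia.
       replace (1 * t + / 2) with (t + / 2) by ring. rewrite Rmult_1_l, Rplus_comm, <- HGr.
       replace (1 * (t + / 2) + - / 2) with t by field. ring. }
  assert (HKd := is_poly_ex_derive _ _ HK).
  rewrite defect_lin, defect_fdiff, defect_symmetric; auto.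
  - ring.
  - intros t; unfold P; auto_derive; auto.
  - destruct m_even as [k ->]. intros t; unfold P.
    replace (2 * k + 2)%nat with (2 * S k)%nat by lia. rewrite !pow_mult. f_equal. field.
  - replace (S (m + 1)) with (m + 2)%nat in HK by lia. exact HK.
  - intros t. unfold fdiff. auto_derive; auto.
  - intros t; unfold P; auto_derive; auto.
Qed.

Lemma end_corrected_rule_exact G n : is_poly (m + 2) G ->
  G (INR n + alpha) - G (- alpha)
  = sum_f_R0 (fun i => Derive G (INR i)) n
    + csum (fun i => Derive G (INR i) + Derive G (INR n - INR i)).
Proof.
  intros HG.
  rewrite <- (telescope_nat (defect G) (Derive G)); auto using defect_at_m1, defect_step.
  unfold defect. ring.
Qed.

End EndCorrection.

(** * Rescaling *)

Definition antideriv_coef (a : nat -> R) (j : nat) : R :=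
  match j with
  | O => 0
  | S j' => a j' / INR (S j')
  end.

Lemma is_derive_polyR_antideriv a d t :
  is_derive (polyR (antideriv_coef a) (S d)) t (polyR a d t).
Proof.
  induction d as [|d IH].
  - unfold polyR; simpl. auto_derive; auto. field.
  - apply (is_derive_plus (polyR (antideriv_coef a) (S d))
             (fun t => antideriv_coef a (S (S d)) * t ^ S (S d))); [exact IH|].
    assert (Hk : INR (S (S d)) <> 0) by (apply not_0_INR; lia).
    simpl antideriv_coef. simpl in Hk. auto_derive; auto. simpl. field. exact Hk.
Qed.

Lemma RInt_polyR a d x y :
  RInt (polyR a d) x y
  = polyR (antideriv_coef a) (S d) y - polyR (antideriv_coef a) (S d) x.
Proof.
  apply is_RInt_unique, (is_RInt_derive (V := R_CompleteNormedModule)).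
  - intros t _. apply is_derive_polyR_antideriv.
  - intros t _. apply (ex_derive_continuous (K := R_AbsRing) (V := R_NormedModule)).
    apply (is_poly_ex_derive d), is_poly_polyR.
Qed.

Theorem mainTheorem2 (alpha : R) (m : nat) (b : nat -> R) :
  Nat.Even m ->
  b_system alpha m b ->
  forall (n : nat) (h : R) (a : nat -> R),
    0 < h ->
    RInt (polyR a (m + 1)) (- alpha * h) ((INR n + alpha) * h)
    = h * sum_f_R0 (fun i => polyR a (m + 1) (INR i * h)) n
      + h * sum_f_R0 (fun i => c_coef m b i *
              (polyR a (m + 1) (INR i * h) + polyR a (m + 1) ((INR n - INR i) * h))) m.
Proof.
  intros m_even b_sys n h a Hh.
  rewrite RInt_polyR.
  (* The equation lives in [R_CompleteNormedModule]; restate it in [R] for [ring]. *)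
  match goal with |- ?lhs = ?rhs => change (@eq R lhs rhs) end.
  set (F := polyR (antideriv_coef a) (S (m + 1))).
  assert (HF : forall t, is_derive F t (polyR a (m + 1) t))
    by (intros; apply is_derive_polyR_antideriv).
  set (G := fun s => / h * F (h * s + 0)).
  assert (HG : is_poly (m + 2) G).
  { apply is_poly_affine. replace (m + 2)%nat with (S (m + 1)) by lia. apply is_poly_polyR. }
  assert (HDG : forall s, Derive G s = polyR a (m + 1) (s * h)).
  { intros s. unfold G. rewrite Derive_affine by (eexists; apply HF).
    rewrite (is_derive_unique _ _ _ (HF _)).
    replace (h * s + 0) with (s * h) by ring. field. lra. }
  pose proof (end_corrected_rule_exact alpha m b b_sys m_even G n HG) as Hsum.
  rewrite (sum_eq _ (fun i => polyR a (m + 1) (INR i * h))) in Hsum by (intros; apply HDG).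
  rewrite (csum_ext m b _ (fun i => polyR a (m + 1) (INR i * h)
                                    + polyR a (m + 1) ((INR n - INR i) * h))) in Hsum
    by (intros; rewrite !HDG; auto).
  unfold csum, G in Hsum. rewrite !Rplus_0_r in Hsum.
  replace (F ((INR n + alpha) * h) - F (- alpha * h))
    with (h * (/ h * F (h * (INR n + alpha)) - / h * F (h * - alpha))).
  - rewrite Hsum. ring.
  - rewrite (Rmult_comm h (INR n + alpha)), (Rmult_comm h (- alpha)). field. lra.
Qed.
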